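(* Let $F$ be a recurrent set and let $X\subset F$ be a bifix code of finite $F$-degree $d\ge 2$. Let $I=I(X)$, $K=K(X)$, $G=(IA\cap F)\setminus I$ and $D=(AI\cap F)\setminus I$. Then $X'=K\cup(G\cap D)$ is a bifix code of $F$-degree $d-1$.
   Context: $A$ is a finite alphabet. $F\subset A^*$ is recurrent if it is nonempty, closed under factors, and for all $u,w\in F$ there is $v\in F$ with $uvw\in F$. A bifix code is a set of nonempty words none of which is a proper prefix or proper suffix of another. A parse of $w$ with respect to $X$ is a triple $(v,x,u)$ with $w=vxu$, $v$ having no suffix in $X$, $x\in X^*$, $u$ having no prefix in $X$; $\delta_X(w)$ is the number of parses and the $F$-degree is $d_F(X)=\max_{w\in F}\delta_X(w)$. $I(X)=\{w\in A^*\mid A^+wA^+\cap X\neq\emptyset\}$ is the set of internal factors of $X$, and $K(X)=X\cap I(X)$ is the kernel of $X$. *)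

From Stdlib Require Import ClassicalEpsilon.
From mathcomp Require Import all_boot.
Set Implicit Arguments. Unset Strict Implicit. Unset Printing Implicit Defensive.

Definition lang (A : finType) := seq A -> Prop.

Definition pb (P : Prop) : bool :=
  if excluded_middle_informative P then true else false.

Section Words.
Variable A : finType.

Definition factorial (F : lang A) : Prop :=
  forall u f v, F (u ++ f ++ v) -> F f.

Definition recurrent (F : lang A) : Prop :=
  (exists w, F w) /\ factorial F /\
  (forall u w, F u -> F w -> exists v, F v /\ F (u ++ v ++ w)).

Definition bifix_code (X : lang A) : Prop :=
  (forall x, X x -> x <> [::]) /\
  (forall x y, X x -> X y -> prefix x y -> x = y) /\
  (forall x y, X x -> X y -> suffix x y -> x = y).

Inductive star (X : lang A) : lang A :=
  | star_nil : star X [::]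
  | star_cons x w : X x -> star X w -> star X (x ++ w).

Definition is_parse (X : lang A) (w v x u : seq A) : Prop :=
  w = v ++ x ++ u /\
  (forall s, suffix s v -> ~ X s) /\
  star X x /\
  (forall p, prefix p u -> ~ X p).

(* delta_X(w): number of parses; a parse is determined by the cut points
   i <= j, with v = w[0,i), x = w[i,j), u = w[j,|w|). *)
Definition delta (X : lang A) (w : seq A) : nat :=
  #|[set ij : 'I_(size w).+1 * 'I_(size w).+1 |
      ((ij.1 : nat) <= ij.2) &&
      pb (is_parse X w (take ij.1 w) (drop ij.1 (take ij.2 w)) (drop ij.2 w))]|.

Definition Fdegree (F X : lang A) (d : nat) : Prop :=
  (exists w, F w /\ delta X w = d) /\ (forall w, F w -> delta X w <= d).

Definition internal (X : lang A) : lang A :=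
  fun w => exists p s, p <> [::] /\ s <> [::] /\ X (p ++ w ++ s).

Definition kernel (X : lang A) : lang A := fun w => X w /\ internal X w.

Definition Gset (F X : lang A) : lang A :=
  fun w => (exists u a, w = rcons u a /\ internal X u) /\ F w /\ ~ internal X w.

Definition Dset (F X : lang A) : lang A :=
  fun w => (exists a u, w = a :: u /\ internal X u) /\ F w /\ ~ internal X w.

Definition Xprime (F X : lang A) : lang A :=
  fun w => kernel X w \/ (Gset F X w /\ Dset F X w).

End Words.

From Pilot Require Import Defs.
From Stdlib Require Import ClassicalEpsilon.
From mathcomp Require Import all_boot.
Set Implicit Arguments. Unset Strict Implicit. Unset Printing Implicit Defensive.

(* For a bifix code [X], a parse of [w] is determined by its left cut point [i], which is
   admissible exactly when the prefix of length [i] has no suffix in [X] (the rest of the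
   parse is then forced); symmetrically for the right cut point. So [delta X] grows by one
   per added letter if the new word has no suffix (prefix) in [X], and by zero otherwise.
   With recurrence of [F] this shows that the words of [F] of degree [d] are exactly its
   non-internal words, internal words having degree [< d]. The words of [G] and [D] are
   non-internal one-letter extensions of internal words, hence have no suffix, resp. prefix,
   in [X]; this makes [X'] a bifix code. Finally every non-internal word of [F] ends with a
   word of [X'], and induction on [w] gives [delta X' w = min (delta X w) (d - 1)]. *)

Lemma pbP (P : Prop) : reflect P (pb P).
Proof. by rewrite /pb; case: excluded_middle_informative => h; constructor. Qed.

Lemma pb_eq (P Q : Prop) : (P <-> Q) -> pb P = pb Q.
Proof. by move=> PQ; apply/pbP/pbP; apply PQ. Qed.

Lemma leq_pb (P Q : Prop) : (P -> Q) -> pb P <= pb Q.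
Proof. by move=> PQ; case: (pbP P) => // /PQ /pbP ->. Qed.

Lemma sum_nat_at_most_one n (P : pred 'I_n) :
  (forall j k, P j -> P k -> j = k) -> \sum_(j < n) P j = [exists j, P j].
Proof.
move=> P1; case: existsP => [[j Pj] | noP]; last first.
  by apply: big1 => j _; case: (boolP (P j)) => // Pj; case: noP; exists j.
rewrite (bigD1 j) //= Pj big1 // => k /eqP kj.
by case: (boolP (P k)) => // Pk; case: kj; apply: P1.
Qed.

Lemma card_pair_sum (I J : finType) (P : I -> J -> bool) :
  #|[set ij | P ij.1 ij.2]| = \sum_(i : I) \sum_(j : J) P i j.
Proof.
rewrite pair_big /= -sum1_card big_mkcond /=.
by apply: eq_bigr => -[i j] _; rewrite inE; case: P.
Qed.

Lemma prefixes_comparable (T : eqType) (x y w : seq T) :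
  prefix x w -> prefix y w -> prefix x y || prefix y x.
Proof.
wlog le_xy : x y / size x <= size y => [hwlog | ].
  by case: (leqP (size x) (size y)) => [|/ltnW] /hwlog h *; rewrite ?h // orbC h.
rewrite !prefixE => /eqP xw /eqP yw.
by rewrite -yw take_takel // xw eqxx.
Qed.

Lemma prefix_rcons_inv (T : eqType) (s u : seq T) a :
  prefix s (rcons u a) -> s = rcons u a \/ prefix s u.
Proof.
case/prefixP=> t; case/lastP: t => [|t c]; first by rewrite cats0; left.
by rewrite -rcons_cat => /rcons_inj[-> _]; right; apply: prefix_prefix.
Qed.

Lemma suffix_cons_inv (T : eqType) (s u : seq T) a :
  suffix s (a :: u) -> s = a :: u \/ suffix s u.
Proof.
case/suffixP=> -[|c t] /= e; first by left.
by case: e => _ ->; right; apply: suffix_suffix.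
Qed.

Lemma suffix_rcons_inv (T : eqType) (b a : T) y t :
  suffix (b :: y) (rcons t a) -> exists2 y', b :: y = rcons y' a & suffix y' t.
Proof. by rewrite lastI suffix_rcons => /andP[/eqP <- ?]; exists (belast b y). Qed.

Section Parsing.
Variable A : finType.
Implicit Types (Y : lang A) (w u v p s t x : seq A).

Definition nosuffix Y w := forall s, suffix s w -> ~ Y s.
Definition noprefix Y w := forall p, prefix p w -> ~ Y p.

Definition star_noprefix_cut Y t k := star Y (take k t) /\ noprefix Y (drop k t).
Definition nosuffix_star_cut Y t k := nosuffix Y (take k t) /\ star Y (drop k t).

Definition rev_lang Y : lang A := fun s => Y (rev s).

Lemma star_cat Y u v : star Y u -> star Y v -> star Y (u ++ v).
Proof. by elim=> // x w Yx _ IH sv; rewrite -catA; constructor; auto. Qed.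

Lemma star_one Y x : Y x -> star Y x.
Proof. by move=> Yx; rewrite -(cats0 x); do 2?constructor. Qed.

Lemma star_rev Y p : star Y p -> star (rev_lang Y) (rev p).
Proof.
elim=> [|x w Yx _ IH]; first by constructor.
by rewrite rev_cat; apply: star_cat => //; apply: star_one; rewrite /rev_lang revK.
Qed.

Lemma bifix_code_rev Y : bifix_code Y -> bifix_code (rev_lang Y).
Proof.
case=> ne [pc sc]; split; first by move=> x /ne nx ex; apply: nx; rewrite ex.
split=> x y Yx Yy xy; apply: (can_inj revK).
  by apply: sc => //; rewrite suffix_rev.
by apply: pc => //; rewrite -prefix_rev !revK.
Qed.

Section NonemptyWords.
Variable Y : lang A.
Hypothesis Y_nonempty : forall x, Y x -> x <> [::].

(* The longest prefix of [t] in [Y^*] cannot be followed by a word of [Y]. *)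
Lemma star_noprefix_cut_exists t : exists2 k, k <= size t & star_noprefix_cut Y t k.
Proof.
pose P k := (k <= size t) && pb (star Y (take k t)).
have P0 : exists k, P k by exists 0; rewrite /P take0 leq0n; apply/pbP; constructor.
have Pbound k : P k -> k <= size t by case/andP.
case: (ex_maxnP P0 Pbound) => k /andP[kt /pbP sk] kmax.
exists k => //; split=> // x /prefixP[r er] Yx.
have kx_t : k + size x <= size t.
  by rewrite -(cat_take_drop k t) er !size_cat size_takel // leq_add2l leq_addr.
have : P (k + size x).
  by rewrite /P kx_t takeD er take_size_cat //; apply/pbP/star_cat/star_one.
move/kmax; rewrite -[X in _ <= X]addn0 leq_add2l leqn0 size_eq0 => /eqP x0.
exact: Y_nonempty Yx x0.
Qed.

Lemma nosuffix_star_cut_exists t : exists2 k, k <= size t & nosuffix_star_cut Y t k.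
Proof.
pose P k := (k <= size t) && pb (star Y (drop k t)).
have Pt : exists k, P k.
  by exists (size t); rewrite /P leqnn drop_size; apply/pbP; constructor.
case: (ex_minnP Pt) => k /andP[kt /pbP sk] kmin.
exists k => //; split=> // x /suffixP[r er] Yx.
have sz_r : size r + size x = k by rewrite -size_cat -er size_takel.
have : P (size r).
  rewrite /P (leq_trans _ kt) -?sz_r ?leq_addr //; apply/pbP.
  rewrite -(cat_take_drop k t) er -catA drop_size_cat //.
  exact/star_cat/sk/star_one.
move/kmin; rewrite -sz_r -[X in _ <= X]addn0 leq_add2l leqn0 size_eq0 => /eqP x0.
exact: Y_nonempty Yx x0.
Qed.

End NonemptyWords.

Lemma cat_cuts w i j : i <= j -> w = take i w ++ drop i (take j w) ++ drop j w.
Proof.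
move=> ij; rewrite -{1}(cat_take_drop j w) -{1}(cat_take_drop i (take j w)).
by rewrite take_takel // catA.
Qed.

Lemma is_parse_cutsL Y w i j : i <= j ->
  is_parse Y w (take i w) (drop i (take j w)) (drop j w) <->
  nosuffix Y (take i w) /\ star_noprefix_cut Y (drop i w) (j - i).
Proof.
move=> ij; rewrite /star_noprefix_cut take_drop drop_drop subnK //.
by split=> [[_ [nv [sx nu]]] | [nv [sx nu]]] //; split; first exact: cat_cuts.
Qed.

Lemma is_parse_cutsR Y w i j : i <= j ->
  is_parse Y w (take i w) (drop i (take j w)) (drop j w) <->
  nosuffix_star_cut Y (take j w) i /\ noprefix Y (drop j w).
Proof.
move=> ij; rewrite /nosuffix_star_cut take_takel //.
by split=> [[_ [nv [sx nu]]] | [[nv sx] nu]] //; split; first exact: cat_cuts.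
Qed.

Lemma star_noprefix_factor_uniq Y p1 p2 r1 r2 : bifix_code Y -> star Y p1 -> star Y p2 ->
  p1 ++ r1 = p2 ++ r2 -> noprefix Y r1 -> noprefix Y r2 -> p1 = p2.
Proof.
case=> _ [pcY _] sp1; elim: sp1 p2 r1 r2 => [|x w1 Yx _ IH] p2 r1 r2.
  case=> [//|x w2 Yx _] /= -> nr1 _.
  by case: (nr1 x); rewrite -?catA ?prefix_prefix.
case=> [|x' w2 Yx' sw2] /=.
  by move=> <- _ nr2; case: (nr2 x); rewrite -?catA ?prefix_prefix.
rewrite -!catA => e nr1 nr2.
have xx' : x = x'.
  have x'w : prefix x' (x ++ w1 ++ r1) by rewrite e prefix_prefix.
  case/orP: (prefixes_comparable (prefix_prefix _ _) x'w); first exact: pcY.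
  by move=> x'x; symmetry; apply: pcY.
move: e; rewrite -xx' => /(congr1 (drop (size x))); rewrite !drop_size_cat // => e.
by rewrite (IH _ _ _ sw2 e nr1 nr2).
Qed.

Definition parse_cut Y w (i j : nat) : bool :=
  (i <= j) && pb (is_parse Y w (take i w) (drop i (take j w)) (drop j w)).

Lemma delta_parse_cuts Y w :
  delta Y w = \sum_(i < (size w).+1) \sum_(j < (size w).+1) parse_cut Y w i j.
Proof. exact: card_pair_sum. Qed.

Section BifixCode.
Variable Y : lang A.
Hypothesis bifixY : bifix_code Y.

Lemma nosuffix_star_factor_uniq l1 l2 p1 p2 : star Y p1 -> star Y p2 ->
  l1 ++ p1 = l2 ++ p2 -> nosuffix Y l1 -> nosuffix Y l2 -> p1 = p2.
Proof.
have noprefix_rev l : nosuffix Y l -> noprefix (rev_lang Y) (rev l).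
  by move=> nl p pl; apply: nl; rewrite suffix_revLR.
move=> sp1 sp2 e nl1 nl2; apply: (can_inj revK).
apply: (star_noprefix_factor_uniq (bifix_code_rev bifixY) (star_rev sp1) (star_rev sp2)
  _ (noprefix_rev _ nl1) (noprefix_rev _ nl2)).
by rewrite -!rev_cat e.
Qed.

Lemma star_noprefix_cut_uniq t k1 k2 : k1 <= size t -> k2 <= size t ->
  star_noprefix_cut Y t k1 -> star_noprefix_cut Y t k2 -> k1 = k2.
Proof.
move=> k1t k2t [s1 n1] [s2 n2].
have := star_noprefix_factor_uniq bifixY s1 s2 _ n1 n2.
by rewrite !cat_take_drop => /(_ erefl)/(congr1 size); rewrite !size_takel.
Qed.

Lemma nosuffix_star_cut_uniq t k1 k2 : k1 <= size t -> k2 <= size t ->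
  nosuffix_star_cut Y t k1 -> nosuffix_star_cut Y t k2 -> k1 = k2.
Proof.
move=> k1t k2t [n1 s1] [n2 s2].
have := nosuffix_star_factor_uniq s1 s2 _ n1 n2.
rewrite !cat_take_drop => /(_ erefl)/(congr1 size); rewrite !size_drop.
by move/(congr1 (subn (size t))); rewrite !subKn.
Qed.

Let Y_nonempty : forall x, Y x -> x <> [::] := bifixY.1.

Lemma sum_parse_cuts_row w (i : 'I_(size w).+1) :
  \sum_(j < (size w).+1) parse_cut Y w i j = pb (nosuffix Y (take i w)).
Proof.
have iw : i <= size w by rewrite -ltnS.
rewrite sum_nat_at_most_one => [|j1 j2]; last first.
  move=> /andP[ij1 /pbP/(is_parse_cutsL _ _ ij1)[_ c1]].
  move=> /andP[ij2 /pbP/(is_parse_cutsL _ _ ij2)[_ c2]].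
  have jt (j : 'I_(size w).+1) : j - i <= size (drop i w).
    by rewrite size_drop leq_sub2r // -ltnS.
  apply: val_inj; have e := star_noprefix_cut_uniq (jt j1) (jt j2) c1 c2.
  by rewrite /= -(subnK ij1) e subnK.
congr (nat_of_bool _).
apply/existsP/pbP => [[j /andP[ij /pbP/(is_parse_cutsL _ _ ij)[]]] // | nw].
have [k kt ck] := star_noprefix_cut_exists Y_nonempty (drop i w).
have ik : i + k < (size w).+1 by rewrite ltnS -leq_subRL // -size_drop.
have lik : i <= i + k by apply: leq_addr.
exists (Ordinal ik); rewrite /parse_cut /= lik.
by apply/pbP/is_parse_cutsL; rewrite ?addKn.
Qed.

Lemma sum_parse_cuts_col w (j : 'I_(size w).+1) :
  \sum_(i < (size w).+1) parse_cut Y w i j = pb (noprefix Y (drop j w)).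
Proof.
have jw : j <= size w by rewrite -ltnS.
rewrite sum_nat_at_most_one => [|i1 i2]; last first.
  move=> /andP[ij1 /pbP/(is_parse_cutsR _ _ ij1)[c1 _]].
  move=> /andP[ij2 /pbP/(is_parse_cutsR _ _ ij2)[c2 _]].
  apply: val_inj; apply: (nosuffix_star_cut_uniq _ _ c1 c2); by rewrite size_takel.
congr (nat_of_bool _).
apply/existsP/pbP => [[i /andP[ij /pbP/(is_parse_cutsR _ _ ij)[]]] // | nw].
have [k + ck] := nosuffix_star_cut_exists Y_nonempty (take j w).
rewrite size_takel // => kj.
have kw : k < (size w).+1 by rewrite ltnS (leq_trans kj).
by exists (Ordinal kw); rewrite /parse_cut /= kj; apply/pbP/is_parse_cutsR.
Qed.

Lemma delta_prefix_sum w : delta Y w = \sum_(i < (size w).+1) pb (nosuffix Y (take i w)).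
Proof. by rewrite delta_parse_cuts; apply: eq_bigr => i _; apply: sum_parse_cuts_row. Qed.

Lemma delta_suffix_sum w : delta Y w = \sum_(j < (size w).+1) pb (noprefix Y (drop j w)).
Proof.
rewrite delta_parse_cuts exchange_big.
by apply: eq_bigr => j _; apply: sum_parse_cuts_col.
Qed.

Lemma delta_rcons w a : delta Y (rcons w a) = delta Y w + pb (nosuffix Y (rcons w a)).
Proof.
rewrite !delta_prefix_sum size_rcons big_ord_recr /= take_oversize ?size_rcons //.
congr (_ + _); apply: eq_bigr => i _.
by rewrite -cats1 takel_cat // -ltnS.
Qed.

Lemma delta_cons a w : delta Y (a :: w) = delta Y w + pb (noprefix Y (a :: w)).
Proof. by rewrite !delta_suffix_sum /= big_ord_recl /= addnC. Qed.

Lemma delta_nil : delta Y [::] = 1.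
Proof.
rewrite delta_prefix_sum big_ord_recl big_ord0 addn0 /=.
have -> // : pb (nosuffix Y [::]).
by apply/pbP => s; rewrite suffixs0 => /eqP -> /Y_nonempty.
Qed.

Lemma delta_cat u w :
  delta Y (u ++ w) = delta Y w + \sum_(j < size u) pb (noprefix Y (drop j u ++ w)).
Proof.
elim: u => [|a u IH]; first by rewrite big_ord0 addn0.
by rewrite cat_cons delta_cons IH big_ord_recl -addnA [_ + pb _]addnC.
Qed.

Lemma delta_suffix_le u w : delta Y w <= delta Y (u ++ w).
Proof. by rewrite delta_cat leq_addr. Qed.

Lemma delta_prefix_le u w : delta Y u <= delta Y (u ++ w).
Proof.
elim/last_ind: w => [|w a IH]; first by rewrite cats0.
by rewrite -rcons_cat delta_rcons (leq_trans IH) ?leq_addr.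
Qed.

Lemma noprefix_proper_prefix u q : Y (u ++ q) -> q <> [::] -> noprefix Y u.
Proof.
move=> Yuq q0 x xu Yx; case: bifixY => _ [pcY _].
have xuq := pcY _ _ Yx Yuq (prefix_catl q xu).
move: (size_prefix xu); rewrite xuq size_cat -[X in _ <= X]addn0 leq_add2l leqn0.
by rewrite size_eq0 => /eqP.
Qed.

End BifixCode.
End Parsing.

Section InternalFactors.
Variables (A : finType) (X : lang A).
Implicit Types (u v w z r s p : seq A).

Lemma internal_infix u w v : internal X (u ++ w ++ v) -> internal X w.
Proof.
case=> p [s [p0 [s0 Xpuwvs]]]; exists (p ++ u), (v ++ s).
split; first by case: p p0 {Xpuwvs}.
split; first by case: s s0 {Xpuwvs} => // c s _; case: v.
by rewrite -!catA; move: Xpuwvs; rewrite -!catA.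
Qed.

Lemma internal_prefix p w : prefix p w -> internal X w -> internal X p.
Proof. by case/prefixP=> s -> Ips; apply: (internal_infix (u := [::]) Ips). Qed.

Lemma internal_suffix s w : suffix s w -> internal X w -> internal X s.
Proof.
by case/suffixP=> p -> Ips; apply: (internal_infix (u := p) (v := [::])); rewrite cats0.
Qed.

Lemma noprefix_cat_external u z r : u <> [::] -> ~ internal X z ->
  noprefix X (u ++ z) -> noprefix X (u ++ z ++ r).
Proof.
move=> u0 nIz nuz x xuzr Xx; rewrite catA in xuzr.
case/orP: (prefixes_comparable xuzr (prefix_prefix (u ++ z) r)) => [xuz | /prefixP[t ex]].
  exact: nuz xuz Xx.
case: t ex => [|c t] ex; first by apply: (nuz x) => //; rewrite ex cats0 prefix_refl.
by apply: nIz; exists u, (c :: t); split=> //; split=> //; rewrite catA -ex.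
Qed.

End InternalFactors.

Section Factorial.
Variables (A : finType) (F : lang A).
(* [all_boot] rebinds [factorial] to the factorial function on [nat]. *)
Hypothesis factF : Defs.factorial F.

Lemma factorial_prefix p w : prefix p w -> F w -> F p.
Proof. by case/prefixP=> s -> /(factF (u := [::])). Qed.

Lemma factorial_suffix s w : suffix s w -> F w -> F s.
Proof. by case/suffixP=> p -> Fps; apply: (factF (u := p) (v := [::])); rewrite cats0. Qed.

End Factorial.

Section DegreeDrop.
Variables (A : finType) (F X : lang A) (d : nat).
Hypotheses (recF : recurrent F) (XinF : forall x, X x -> F x) (bifixX : bifix_code X)
  (degX : Fdegree F X d) (d_ge2 : 2 <= d).
Implicit Types (u v w z t s : seq A).

Local Notation I := (internal X).
Local Notation X' := (Xprime F X).

Let factF : Defs.factorial F := recF.2.1.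

Lemma delta_le_degree w : F w -> delta X w <= d.
Proof. exact: degX.2. Qed.

Lemma delta_internal_lt s : I s -> delta X s < d.
Proof.
case=> -[|c p] [q [p0 [q0 Xcpsq]]] //.
have Fcps : F (c :: p ++ s).
  by apply: (factorial_prefix factF _ (XinF Xcpsq)); rewrite catA prefix_prefix.
have ncps : pb (noprefix X (c :: p ++ s)).
  by apply/pbP/(noprefix_proper_prefix bifixX _ q0); rewrite /= -catA.
apply: leq_trans (delta_le_degree Fcps).
by rewrite delta_cons // ncps addn1 ltnS delta_suffix_le.
Qed.

(* Recurrence puts [z] in a word [l z r] of [F] where [l] starts and [r] ends with a word of
   degree [d]. Maximality of [d] gives [delta (l z r) = delta (z r)], i.e. every suffix of [l]
   followed by [z r] has a prefix in [X]; as [z] is not internal, that prefix ends inside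
   [z], so [delta (l z) = delta z] as well. *)
Lemma delta_external z : F z -> ~ I z -> delta X z = d.
Proof.
move=> Fz nIz; case: degX => -[w0 [Fw0 dw0]] _.
have [m [_ Fw0mz]] := recF.2.2 _ _ Fw0 Fz.
have [m' [_ Fw0mzm'w0]] := recF.2.2 _ _ Fw0mz Fw0.
pose l := w0 ++ m; pose r := m' ++ w0.
pose S t := \sum_(j < size l) pb (noprefix X (drop j l ++ t)).
have S_zr : S (z ++ r) = 0.
  have d_le : d <= delta X (z ++ r) by rewrite -dw0 /r catA delta_suffix_le.
  have : delta X (l ++ z ++ r) <= d.
    by apply: delta_le_degree; move: Fw0mzm'w0; rewrite /l /r -!catA.
  rewrite delta_cat // => /leq_trans/(_ d_le).
  by rewrite -[X in _ <= X]addn0 leq_add2l leqn0 => /eqP.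
have S_z : S z <= S (z ++ r).
  apply: leq_sum => j _; apply/leq_pb/noprefix_cat_external/nIz.
  by move/(congr1 size)/eqP; rewrite size_drop subn_eq0 leqNgt ltn_ord.
have d_le_lz : d <= delta X (l ++ z) by rewrite -dw0 /l -catA delta_prefix_le.
move: S_z d_le_lz; rewrite S_zr leqn0 delta_cat // -/(S _) => /eqP ->.
by rewrite addn0 => d_le; apply/eqP; rewrite eqn_leq d_le delta_le_degree.
Qed.

Lemma internal_nil : I [::].
Proof.
apply: NNPP => nI0; case: recF => -[w Fw] _.
have F0 : F [::] := factorial_prefix factF (prefix0s w) Fw.
by move: d_ge2; rewrite -(delta_external F0 nI0) delta_nil.
Qed.

Lemma delta_external_step u w (b : bool) : I u -> F w -> ~ I w ->
  delta X w = delta X u + b -> delta X u = d.-1 /\ b.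
Proof.
move=> Iu Fw nIw; rewrite delta_external // => db.
have := delta_internal_lt Iu; rewrite db.
by case: b {db} => /=; rewrite ?addn0 ?ltnn // addn1.
Qed.

Lemma Gset_nosuffix w : Gset F X w -> nosuffix X w.
Proof.
case=> -[u [a [-> Iu]]] [Fw nIw].
by have [_ /pbP] := delta_external_step Iu Fw nIw (delta_rcons bifixX u a).
Qed.

Lemma Dset_noprefix w : Dset F X w -> noprefix X w.
Proof.
case=> -[a [u [-> Iu]]] [Fw nIw].
by have [_ /pbP] := delta_external_step Iu Fw nIw (delta_cons bifixX a u).
Qed.

Lemma Xprime_prefix_code x y : X' x -> X' y -> prefix x y -> x = y.
Proof.
case: bifixX => _ [pcX _].
move=> [[Xx _] | [[_ [_ nIx]] _]] [[Xy Iy] | [[[u [a [ey Iu]]] _] Dy]] xy.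
- exact: pcX.
- by case: (Dset_noprefix Dy xy Xx).
- by case: nIx; apply: internal_prefix xy Iy.
- move: xy; rewrite ey => /prefix_rcons_inv[-> // | xu].
  by case: nIx; apply: internal_prefix xu Iu.
Qed.

Lemma Xprime_suffix_code x y : X' x -> X' y -> suffix x y -> x = y.
Proof.
case: bifixX => _ [_ scX].
move=> [[Xx _] | [_ [_ [_ nIx]]]] [[Xy Iy] | [Gy [[b [v [ey Iv]]] _]]] xy.
- exact: scX.
- by case: (Gset_nosuffix Gy xy Xx).
- by case: nIx; apply: internal_suffix xy Iy.
- move: xy; rewrite ey => /suffix_cons_inv[-> // | xv].
  by case: nIx; apply: internal_suffix xv Iv.
Qed.

Lemma Xprime_bifix : bifix_code X'.
Proof.
split; last by split; [apply: Xprime_prefix_code | apply: Xprime_suffix_code].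
by move=> x [[/bifixX.1] // | [[[u [a [-> _]]] _] _]]; case: u.
Qed.

Lemma nosuffix_Xprime_internal w : I w -> nosuffix X' w <-> nosuffix X w.
Proof.
move=> Iw; split=> nw s sw Xs; apply: (nw s sw).
  by left; split; last apply: internal_suffix sw Iw.
case: Xs => [[] // | [[_ [_ nIs]] _]].
by case: nIs; apply: internal_suffix sw Iw.
Qed.

Lemma external_minimal_suffix w : ~ I w ->
  exists b y, [/\ suffix (b :: y) w, I y & ~ I (b :: y)].
Proof.
elim: w => [|c w IH] nIw; first by case: nIw; apply: internal_nil.
case: (classic (I w)) => Iw; first by exists c, w; split=> //; apply: suffix_refl.
have [b [y [byw Iy nIby]]] := IH Iw; exists b, y; split=> //.
exact: suffix_trans byw (suffix_cons _ _).
Qed.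

Lemma Xprime_suffix_of_rcons t a w : suffix (rcons t a) w -> F w -> I t ->
  ~ I (rcons t a) -> exists2 s, suffix s w & X' s.
Proof.
move=> taw Fw It nIta.
have [b [y [byta Iy nIby]]] := external_minimal_suffix nIta.
have byw := suffix_trans byta taw.
have Fby := factorial_suffix factF byw Fw.
have [y' eby y't] := suffix_rcons_inv byta.
exists (b :: y) => //; right; split; split=> //.
  by exists y', a; split=> //; apply: internal_suffix y't It.
by exists b, y.
Qed.

(* For [w = u a] with [u] external, take a shortest external suffix [c t] of [u]. If [t a] is
   internal, then [c t] and [c t a] both lie in [D], so [delta t = delta (t a) = d - 1] and
   [t a] ends with a word of [X], which is then in the kernel. *)
Lemma external_Xprime_suffix w : F w -> ~ I w -> exists2 s, suffix s w & X' s.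
Proof.
case/lastP: w => [_ nI0 | u a Fua nIua]; first by case: nI0; apply: internal_nil.
have Fu := factorial_prefix factF (prefix_rcons u a) Fua.
case: (classic (I u)) => Iu.
  exact: Xprime_suffix_of_rcons (suffix_refl _) Fua Iu nIua.
have [c [t [ctu It nIct]]] := external_minimal_suffix Iu.
have cta_ua : suffix (c :: rcons t a) (rcons u a).
  by case/suffixP: ctu => r ->; rewrite rcons_cat suffix_suffix.
have ta_ua := suffix_trans (suffix_cons _ _) cta_ua.
case: (classic (I (rcons t a))) => [Ita | nIta]; last first.
  exact: Xprime_suffix_of_rcons ta_ua Fua It nIta.
have Fct := factorial_suffix factF ctu Fu.
have Fcta := factorial_suffix factF cta_ua Fua.
have nIcta : ~ I (c :: rcons t a).
  by move/(internal_prefix (prefix_rcons (c :: t) a)).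
have [dt _] := delta_external_step It Fct nIct (delta_cons bifixX c t).
have [dta _] := delta_external_step Ita Fcta nIcta (delta_cons bifixX c _).
have : ~~ pb (nosuffix X (rcons t a)).
  move: (delta_rcons bifixX t a); rewrite dt dta -[X in X = _]addn0.
  by move/addnI; case: (pb _).
move/pbP => ta_Xsuffix; apply: NNPP => noXs; apply: ta_Xsuffix => x xta Xx.
apply: noXs; exists x; first exact: suffix_trans xta ta_ua.
by left; split; last apply: internal_suffix xta Ita.
Qed.

Lemma delta_Xprime w : F w -> delta X' w = minn (delta X w) d.-1.
Proof.
have bifixX' := Xprime_bifix.
have d_gt0 : 0 < d by apply: leq_trans d_ge2.
elim/last_ind: w => [_ | u a IH Fua].
  rewrite (delta_nil bifixX') (delta_nil bifixX); apply/esym/minn_idPl.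
  by rewrite -ltnS prednK.
have Fu := factorial_prefix factF (prefix_rcons u a) Fua.
rewrite delta_rcons // IH //.
case: (classic (I (rcons u a))) => Iua.
  have Iu := internal_prefix (prefix_rcons u a) Iua.
  have le_pred v : I v -> delta X v <= d.-1.
    by move=> Iv; rewrite -ltnS prednK // delta_internal_lt.
  rewrite (pb_eq (nosuffix_Xprime_internal Iua)) (minn_idPl (le_pred _ Iu)).
  by rewrite (minn_idPl (le_pred _ Iua)) (delta_rcons bifixX).
have [s sua X's] := external_Xprime_suffix Fua Iua.
have -> : pb (nosuffix X' (rcons u a)) = false by apply/pbP => /(_ s sua).
rewrite addn0 (delta_external Fua Iua) (minn_idPr (leq_pred d)); apply/minn_idPr.
move: (delta_rcons bifixX u a); rewrite (delta_external Fua Iua) => ->.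
by case: (pb _); rewrite ?addn1 ?addn0 ?leq_pred.
Qed.

End DegreeDrop.

Theorem mainTheorem4 (A : finType) (F X : lang A) (d : nat) :
  recurrent F ->
  (forall x, X x -> F x) ->
  bifix_code X ->
  Fdegree F X d ->
  2 <= d ->
  bifix_code (Xprime F X) /\ Fdegree F (Xprime F X) d.-1.
Proof.
move=> recF XinF bifixX degX d_ge2.
have deltaX' := delta_Xprime recF XinF bifixX degX d_ge2.
split; first exact: (Xprime_bifix recF XinF bifixX degX).
split=> [|w Fw]; last by rewrite deltaX' // geq_minr.
case: degX => -[w [Fw dw]] _; exists w; split=> //.
by rewrite deltaX' // dw (minn_idPr (leq_pred d)).
Qed.
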